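(* Let $r\in\mathbb R$ and $\lambda\in\mathbb O$ with $r^2+|\lambda|^2=1$. The map $\mathcal R_{r,\lambda}:U_1/_\sim\to U_1/_\sim$, $[1,u,v]\mapsto[1,\ ru+\lambda v,\ \bar\lambda u-rv]$, is an isometry of $U_1/_\sim\subset\mathbb OP^2$ with the metric $g$.
   Context: Octonions: $\mathbb O=\mathbb H\oplus\mathbb H$ with product $(q_1,q_2)(p_1,p_2)=(q_1p_1-\bar p_2q_2,\ p_2q_1+q_2\bar p_1)$, conjugation $\overline{(q_1,q_2)}=(\bar q_1,-q_2)$, $\mathrm{Re}$ the real part, $\langle a,b\rangle=\mathrm{Re}(a\bar b)$, $|a|^2=\langle a,a\rangle$. $\mathbb OP^2=\mathcal U/_\sim$ with $\mathcal U=(\{1\}\times\mathbb O^2)\cup(\mathbb O\times\{1\}\times\mathbb O)\cup(\mathbb O^2\times\{1\})$ and $[a,b,c]\sim[d,e,f]$ iff $(a,b,c)=(d\lambda,e\lambda,f\lambda)$ for some $\lambda\in\mathbb O\setminus\{0\}$; $U_1/_\sim=\{[1,u,v]\}$ is identified with $\mathbb O^2$ via $(u,v)$. The metric $g$ on this chart is the one with quadratic form, for tangent vector $(du,dv)=(\xi,\eta)$, $ds^2=\frac{|\xi|^2(1+|v|^2)+|\eta|^2(1+|u|^2)-2\mathrm{Re}[(u\bar v)(\eta\bar\xi)]}{(1+|u|^2+|v|^2)^2}$ (and the same formula in the other two charts $[u,1,v]\mapsto(u,v)$, $[u,v,1]\mapsto(u,v)$). *)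

From Stdlib Require Import Reals Lra.
From Coquelicot Require Import Coquelicot.
Open Scope R_scope.

(* Quaternions a + b i + c j + d k as ((a,b),(c,d)); octonions as pairs of
   quaternions (Cayley–Dickson, conventions of the paper); the chart
   U_1/~ = O^2 as pairs of octonions.  Using nested products of R gives the
   canonical Coquelicot NormedModule structures (i.e. R^16). *)
Definition quat := ((R * R) * (R * R))%type.
Definition oct := (quat * quat)%type.
Definition pt := (oct * oct)%type.

Definition mkq (a b c d : R) : quat := ((a, b), (c, d)).
Definition q0 (q : quat) : R := fst (fst q).
Definition q1 (q : quat) : R := snd (fst q).
Definition q2 (q : quat) : R := fst (snd q).
Definition q3 (q : quat) : R := snd (snd q).

Definition qadd (p q : quat) : quat :=
  mkq (q0 p + q0 q) (q1 p + q1 q) (q2 p + q2 q) (q3 p + q3 q).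
Definition qopp (p : quat) : quat := mkq (- q0 p) (- q1 p) (- q2 p) (- q3 p).
Definition qscal (r : R) (p : quat) : quat :=
  mkq (r * q0 p) (r * q1 p) (r * q2 p) (r * q3 p).
Definition qconj (p : quat) : quat := mkq (q0 p) (- q1 p) (- q2 p) (- q3 p).
Definition qmul (p q : quat) : quat :=
  mkq (q0 p * q0 q - q1 p * q1 q - q2 p * q2 q - q3 p * q3 q)
      (q0 p * q1 q + q1 p * q0 q + q2 p * q3 q - q3 p * q2 q)
      (q0 p * q2 q - q1 p * q3 q + q2 p * q0 q + q3 p * q1 q)
      (q0 p * q3 q + q1 p * q2 q - q2 p * q1 q + q3 p * q0 q).

Definition oadd (a b : oct) : oct := (qadd (fst a) (fst b), qadd (snd a) (snd b)).
Definition oopp (a : oct) : oct := (qopp (fst a), qopp (snd a)).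
Definition osub (a b : oct) : oct := oadd a (oopp b).
Definition oscal (r : R) (a : oct) : oct := (qscal r (fst a), qscal r (snd a)).
Definition oconj (a : oct) : oct := (qconj (fst a), qopp (snd a)).
Definition omul (a b : oct) : oct :=
  let (x1, x2) := a in let (y1, y2) := b in
  (qadd (qmul x1 y1) (qopp (qmul (qconj y2) x2)),
   qadd (qmul y2 x1) (qmul x2 (qconj y1))).
Definition oRe (a : oct) : R := q0 (fst a).
Definition oinner (a b : oct) : R := oRe (omul a (oconj b)).
Definition onorm2 (a : oct) : R := oinner a a.

(* The quadratic form of the metric g at the point (u,v) of the chart
   U_1/~ = O^2, evaluated on the tangent vector (xi,eta). *)
Definition ds2 (p X : pt) : R :=
  let (u, v) := p in let (xi, eta) := X in
  (onorm2 xi * (1 + onorm2 v) + onorm2 eta * (1 + onorm2 u)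
   - 2 * oRe (omul (omul u (oconj v)) (omul eta (oconj xi))))
  / (1 + onorm2 u + onorm2 v) ^ 2.

Definition Rmap (r : R) (l : oct) (p : pt) : pt :=
  let (u, v) := p in
  (oadd (oscal r u) (omul l v), osub (omul (oconj l) u) (oscal r v)).

Definition is_isometry (F : pt -> pt) : Prop :=
  (exists G : pt -> pt, (forall p, G (F p) = p) /\ (forall p, F (G p) = p)) /\
  (forall p : pt, exists L : pt -> pt,
      filterdiff F (locally p) L /\
      (forall X : pt, ds2 (F p) (L X) = ds2 p X)).

From Stdlib Require Import Reals Lra.
From Coquelicot Require Import Coquelicot.
Open Scope R_scope.

(* R_{r,l} is R-linear, hence its own differential, and it squares to
   multiplication by r^2 + |l|^2 = 1, hence it is bijective.  For the metric,
   put u' = r u + l v, v' = conj(l) u - r v and c = <u conj(v), l>.  A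
   coordinate computation in O (which sidesteps non-associativity) gives
   |u'|^2 = r^2 |u|^2 + |l|^2 |v|^2 + 2 r c,
   |v'|^2 = |l|^2 |u|^2 + r^2 |v|^2 - 2 r c and
   u' conj(v') = (r (|u|^2 - |v|^2) + 2 c) l - u conj(v),
   and likewise for the tangent vector (xi, eta).  As
   Re((u conj v)(eta conj xi)) = <u conj(v), xi conj(eta)>, both sides of ds^2
   become the same rational function of r, the norms of u, v, xi, eta, and the
   inner products of u conj(v), xi conj(eta) and l. *)

Definition linear_maps_bounded (U : NormedModule R_AbsRing) : Prop :=
  forall (V : NormedModule R_AbsRing) (f : U -> V),
    (forall x y, f (plus x y) = plus (f x) (f y)) ->
    (forall k x, f (scal k x) = scal k (f x)) ->
    is_linear f.

Lemma linear_maps_bounded_R : linear_maps_bounded R_NormedModule.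
Proof.
  intros V f f_plus f_scal; split; [exact f_plus | exact f_scal |].
  exists (norm (f 1) + 1); split; [pose proof (norm_ge_0 (f 1)); lra |].
  intros x.
  replace (f x) with (scal x (f 1))
    by (rewrite <- f_scal; f_equal; apply Rmult_1_r).
  eapply Rle_trans; [apply (@norm_scal R_AbsRing V) |].
  change (abs x) with (norm x); rewrite Rmult_comm.
  apply Rmult_le_compat_r; [apply norm_ge_0 | lra].
Qed.

Lemma linear_maps_bounded_prod (U W : NormedModule R_AbsRing) :
  linear_maps_bounded U -> linear_maps_bounded W ->
  linear_maps_bounded (prod_NormedModule R_AbsRing U W).
Proof.
  intros HU HW V f f_plus f_scal; split; [exact f_plus | exact f_scal |].
  assert (lin_l : is_linear (fun x : U => f (x, zero))).
  { apply HU.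
    - intros x y; rewrite <- f_plus.
      change (plus (x, zero) (y, zero)) with (plus x y, plus (zero : W) zero).
      now rewrite plus_zero_l.
    - intros k x; rewrite <- f_scal.
      change (scal k (x, zero)) with (scal k x, scal k (zero : W)).
      now rewrite (@scal_zero_r R_Ring). }
  assert (lin_r : is_linear (fun y : W => f (zero, y))).
  { apply HW.
    - intros x y; rewrite <- f_plus.
      change (plus (zero, x) (zero, y)) with (plus (zero : U) zero, plus x y).
      now rewrite plus_zero_l.
    - intros k x; rewrite <- f_scal.
      change (scal k (zero, x)) with (scal k (zero : U), scal k x).
      now rewrite (@scal_zero_r R_Ring). }
  destruct (linear_norm _ lin_l) as [Ml [Ml_pos Hl]].
  destruct (linear_norm _ lin_r) as [Mr [Mr_pos Hr]].
  exists (Ml + Mr); split; [lra |].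
  intros [x y].
  replace (f (x, y)) with (plus (f (x, zero)) (f (zero, y)))
    by (rewrite <- f_plus;
        change (plus (x, zero) (zero, y)) with (plus x (zero : U), plus (zero : W) y);
        now rewrite plus_zero_r, plus_zero_l).
  eapply Rle_trans; [apply norm_triangle |].
  specialize (Hl x); specialize (Hr y).
  pose proof (norm_le_prod_norm_1 (x, y)); pose proof (norm_le_prod_norm_2 (x, y)).
  cbn [fst snd] in *.
  nra.
Qed.

(* The real operations and numerals are kept folded so that [lazy] only
   unfolds the octonion and Coquelicot structure, leaving a goal for [ring]. *)
Ltac oct_ring :=
  intros;
  repeat match goal with
  | p : pt |- _ => destruct p as [? ?]
  | x : oct |- _ => destruct x as [[[? ?] [? ?]] [[? ?] [? ?]]]
  end;
  lazy -[Rplus Rminus Rmult Ropp pow IZR];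
  repeat match goal with |- (_, _) = (_, _) => f_equal end;
  ring.

Lemma oinner_comm (x y : oct) : oinner x y = oinner y x.
Proof. oct_ring. Qed.

Lemma oRe_omul_conj (a x y : oct) :
  oRe (omul a (omul y (oconj x))) = oinner a (omul x (oconj y)).
Proof. oct_ring. Qed.

Lemma oinner_osub_oscal (a b s : R) (l x y : oct) :
  oinner (osub (oscal a l) (oscal s x)) (osub (oscal b l) (oscal s y)) =
  a * b * onorm2 l - a * s * oinner l y - b * s * oinner x l + s ^ 2 * oinner x y.
Proof. oct_ring. Qed.

Lemma Rmap_plus (r : R) (l : oct) (p q : pt) :
  Rmap r l (plus p q) = plus (Rmap r l p) (Rmap r l q).
Proof. oct_ring. Qed.

Lemma Rmap_scal (r : R) (l : oct) (k : R) (p : pt) :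
  Rmap r l (scal k p) = scal k (Rmap r l p).
Proof. oct_ring. Qed.

Lemma Rmap_is_linear (r : R) (l : oct) : is_linear (Rmap r l).
Proof.
  apply linear_maps_bounded_prod; [.. | apply Rmap_plus | apply Rmap_scal];
  repeat apply linear_maps_bounded_prod; apply linear_maps_bounded_R.
Qed.

Lemma Rmap_involutive (r : R) (l : oct) (p : pt) :
  Rmap r l (Rmap r l p) = scal (r ^ 2 + onorm2 l) p.
Proof. oct_ring. Qed.

Lemma onorm2_Rmap_fst (r : R) (l u v : oct) :
  onorm2 (oadd (oscal r u) (omul l v)) =
  r ^ 2 * onorm2 u + onorm2 l * onorm2 v + 2 * r * oinner (omul u (oconj v)) l.
Proof. oct_ring. Qed.

Lemma onorm2_Rmap_snd (r : R) (l u v : oct) :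
  onorm2 (osub (omul (oconj l) u) (oscal r v)) =
  onorm2 l * onorm2 u + r ^ 2 * onorm2 v - 2 * r * oinner (omul u (oconj v)) l.
Proof. oct_ring. Qed.

Lemma omul_Rmap_conj (r : R) (l u v : oct) :
  omul (oadd (oscal r u) (omul l v)) (oconj (osub (omul (oconj l) u) (oscal r v))) =
  osub (oscal (r * (onorm2 u - onorm2 v) + 2 * oinner (omul u (oconj v)) l) l)
       (oscal (r ^ 2 + onorm2 l) (omul u (oconj v))).
Proof. oct_ring. Qed.

Lemma ds2_Rmap (r : R) (l : oct) (p X : pt) :
  r ^ 2 + onorm2 l = 1 -> ds2 (Rmap r l p) (Rmap r l X) = ds2 p X.
Proof.
  intros Hs; destruct p as [u v], X as [xi eta]; cbv [ds2 Rmap].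
  rewrite !oRe_omul_conj, !omul_Rmap_conj, oinner_osub_oscal, (oinner_comm l).
  rewrite !onorm2_Rmap_fst, !onorm2_Rmap_snd, Hs.
  replace (onorm2 l) with (1 - r ^ 2) by lra.
  unfold Rdiv; f_equal; [ring | f_equal; ring].
Qed.

Theorem proposition4p1 (r : R) (l : oct) :
  r ^ 2 + onorm2 l = 1 -> is_isometry (Rmap r l).
Proof.
  intros Hs; split.
  - exists (Rmap r l); split; intros p; rewrite Rmap_involutive, Hs; exact (scal_one p).
  - intros p; exists (Rmap r l); split.
    + apply filterdiff_linear, Rmap_is_linear.
    + intros X; apply ds2_Rmap, Hs.
Qed.
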